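(* In the setting described in the context with all transition matrices symmetric (so all canonical tuples are real), fix $r$ and $k$, fix $\Lambda_{r}^{(d)}$ and all columns of $U_{r}^{(d)}\in\mathbb{R}^{m\times n}$ except the $k$-th. Let $[U_r^{(d)}]_{-k}\in\mathbb{R}^{m\times(n-1)}$ be $U_r^{(d)}$ with its $k$-th column removed, and let $W\in\mathbb{R}^{m\times(m-n+1)}$ have orthonormal columns spanning the orthogonal complement of the column space of $[U_r^{(d)}]_{-k}$. If $u\in\mathbb{R}^{m-n+1}$ is a unit eigenvector of $W^{\mathrm T}S_{r,k}W$ for its smallest eigenvalue, then $Wu$ is an optimal choice of the $k$-th column $[U_r^{(d)}]_k$ for the problem of minimizing $[U_r^{(d)}]_k^{\mathrm T}S_{r,k}[U_r^{(d)}]_k$ subject to $(U_r^{(d)})^{\mathrm T}U_r^{(d)}=I_n$.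
   Context: A system tuple $(A,C)$ has $A\in\mathbb{R}^{n\times n}$ strictly stable and $C\in\mathbb{R}^{m\times n}$ with $C^{\mathrm T}C=I_n$. For symmetric $A$ a canonical tuple is $(\Lambda,U)$ with $\Lambda=P^{\mathrm T}AP$ diagonal, $U=CP$, $P$ orthogonal. Data systems $X_1,\dots,X_N$ have canonical tuples $(\Lambda_i^{(x)},U_i^{(x)})$; dictionary atoms $D_1,\dots,D_J$ have canonical tuples $(\Lambda_j^{(d)},U_j^{(d)})$; $z_{j,i}$ are real codes. Notation: $[X]_k$ is the $k$-th column of $X$, or the $k$-th diagonal entry if $X$ is diagonal. For $\lambda$ and diagonal $\Lambda$ with entries $\lambda_1,\dots,\lambda_n$, $E(\lambda,\Lambda)=\mathrm{diag}\Big(\frac{(1-|\lambda|^2)(1-|\lambda_l|^2)}{|1-\lambda\lambda_l^{*}|^2}\Big)_{l=1}^n$. Set $F_{r,j,k}=U_j^{(d)}E([\Lambda_r^{(d)}]_k,\Lambda_j^{(d)})(U_j^{(d)})^{\mathrm T}$, $F'_{r,i,k}=U_i^{(x)}E([\Lambda_r^{(d)}]_k,\Lambda_i^{(x)})(U_i^{(x)})^{\mathrm T}$, and $S_{r,k}=\sum_{i=1}^N z_{r,i}\big(\sum_{j\ne r}z_{j,i}F_{r,j,k}-F'_{r,i,k}\big)$ (an $m\times m$ real matrix). *)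

From HB Require Import structures.
From mathcomp Require Import all_boot all_order all_algebra.
Set Implicit Arguments. Unset Strict Implicit. Unset Printing Implicit Defensive.
Import Order.TTheory GRing.Theory Num.Theory.
Local Open Scope ring_scope.

Section Defs.
Variable R : rcfType.

Definition strictly_stable n (A : 'M[R]_n) : Prop :=
  forall a : R, eigenvalue A a -> `|a| < 1.

(* (Lam, U) is a canonical tuple of some system tuple (A, C) with A symmetric
   strictly stable, C^T C = I_n : Lam = P^T A P diagonal (stored as the row
   vector of its diagonal entries), U = C P, P orthogonal. *)
Definition canonical_tuple m n (Lam : 'rV[R]_n) (U : 'M[R]_(m, n)) : Prop :=
  exists (A : 'M[R]_n) (C : 'M[R]_(m, n)) (P : 'M[R]_n),
    [/\ A^T = A, strictly_stable A, C^T *m C = 1%:M,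
        P^T *m P = 1%:M & P^T *m A *m P = diag_mx Lam] /\ U = C *m P.

Definition Emx n (lam : R) (Lam : 'rV[R]_n) : 'M[R]_n :=
  diag_mx (\row_l ((1 - lam ^+ 2) * (1 - Lam 0 l ^+ 2) / (1 - lam * Lam 0 l) ^+ 2)).

Definition Fmx m n (lam : R) (Lam : 'rV[R]_n) (U : 'M[R]_(m, n)) : 'M[R]_m :=
  U *m Emx lam Lam *m U^T.

Definition Smx m n J N (Ld : 'I_J -> 'rV[R]_n) (Ud : 'I_J -> 'M[R]_(m, n))
  (Lx : 'I_N -> 'rV[R]_n) (Ux : 'I_N -> 'M[R]_(m, n)) (z : 'I_J -> 'I_N -> R)
  (r : 'I_J) (k : 'I_n) : 'M[R]_m :=
  \sum_(i < N) z r i *: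
     (\sum_(j < J | j != r) z j i *: Fmx (Ld r 0 k) (Ld j) (Ud j)
      - Fmx (Ld r 0 k) (Lx i) (Ux i)).

Definition replace_col m n (U : 'M[R]_(m, n)) (k : 'I_n) (x : 'cV[R]_m) : 'M[R]_(m, n) :=
  \matrix_(i, j) if j == k then x i 0 else U i j.

Definition quadf m (S : 'M[R]_m) (x : 'cV[R]_m) : R := (x^T *m S *m x) 0 0.
End Defs.

From HB Require Import structures.
From mathcomp Require Import all_boot all_order all_algebra.
From mathcomp Require Import complex.
Import Order.TTheory GRing.Theory Num.Theory.
Local Open Scope ring_scope.
Local Open Scope sesquilinear_scope.

(* On the columns orthogonal to the other n - 1 columns of [U_r^(d)], the
   constraint [U'^T U' = I] says exactly [x = W y] with [y^T y = 1], and then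
   [x^T S x = y^T (W^T S W) y].  As S is symmetric, this Rayleigh quotient is
   bounded below by the least eigenvalue of [W^T S W], which is attained at u.
   The Rayleigh bound comes from the spectral theorem for the hermitian
   complexification of a real symmetric matrix, whose spectral values are real
   eigenvalues of the original matrix. *)

Lemma spectral_diag_eigenvalue {C : numClosedFieldType} {n} (A : 'M[C]_n) i :
  A \is normalmx -> eigenvalue A (spectral_diag A 0 i).
Proof.
move=> /orthomx_spectralP AE.
set P := spectralmx A in AE; set d := spectral_diag A in AE *.
have P_unitary : P \is unitarymx := spectral_unitarymx A.
have PPt : P *m P^t* = 1%:M by apply/unitarymxP.
rewrite invmx_unitary // in AE.
apply/eigenvalueP; exists (row i P).
  rewrite -row_mul AE !mulmxA PPt mul1mx row_mul row_diag_mx.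
  by rewrite -scalemxAl -rowE.
apply/eqP => Pi0.
have /rowP/(_ i) : row i (P *m P^t*) = 0 by rewrite row_mul Pi0 mul0mx.
by rewrite PPt !mxE eqxx => /eqP; rewrite oner_eq0.
Qed.

Lemma herm_quad_ge_spectral_lb {C : numClosedFieldType} {n} (A : 'M[C]_n)
    (c : C) (y : 'rV[C]_n) :
  A \is hermsymmx -> (forall i, c <= spectral_diag A 0 i) ->
  c * (y *m y^t*) 0 0 <= (y *m A *m y^t*) 0 0.
Proof.
move=> A_herm c_le; have /orthomx_spectralP AE := hermitian_normalmx A_herm.
set P := spectralmx A in AE; set d := spectral_diag A in AE c_le.
have P_unitary : P \is unitarymx := spectral_unitarymx A.
rewrite invmx_unitary // in AE.
have PtP : P^t* *m P = 1%:M.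
  by rewrite -invmx_unitary // mulVmx // unitarymx_unit.
set w := y *m P^t*.
have wtE : w^t* = P *m y^t* by rewrite /w trmx_mul map_mxM trmxCK.
have -> : y *m A *m y^t* = w *m diag_mx d *m w^t*.
  by rewrite wtE AE !mulmxA.
have -> : y *m y^t* = w *m w^t*.
  by rewrite wtE mulmxA -(mulmxA y) PtP mulmx1.
clearbody w; rewrite mul_mx_diag !mxE mulr_sumr; apply: ler_sum => j _.
rewrite !mxE mulrAC mulrC.
by apply: ler_wpM2l; [exact: mul_conjC_ge0 | exact: c_le].
Qed.

Section RealSymmetric.
Context {R : rcfType}.
Local Notation toC := (real_complex R).

Lemma eigenvalue_map_real_complex {n} (M : 'M[R]_n) (a : R) :
  eigenvalue (map_mx toC M) a%:C%C -> eigenvalue M a.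
Proof. by rewrite !eigenvalue_root_char -map_char_poly fmorph_root. Qed.

Lemma map_real_complex_hermitian {n} {M : 'M[R]_n} :
  M^T = M -> map_mx toC M \is hermsymmx.
Proof.
move=> M_sym; apply: realsym_hermsym.
  apply/is_hermitianmxP; rewrite expr0 scale1r; apply/matrixP => i j.
  by rewrite !mxE -[in RHS]M_sym mxE.
by rewrite qualifE; apply/'forall_forallP => i j; rewrite mxE complex_real.
Qed.

Lemma sym_quad_ge_min_eigenvalue {n} {M : 'M[R]_n} {lam : R} (y : 'cV[R]_n) :
  M^T = M -> (forall mu, eigenvalue M mu -> lam <= mu) ->
  lam * (y^T *m y) 0 0 <= (y^T *m M *m y) 0 0.
Proof.
move=> M_sym lam_min; have MC_herm := map_real_complex_hermitian M_sym.
have lam_le i : lam%:C%C <= spectral_diag (map_mx toC M) 0 i.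
  have d_real := mxOverP (hermitian_spectral_diag_real MC_herm) 0 i.
  rewrite -(RRe_real d_real) lecR; apply/lam_min/eigenvalue_map_real_complex.
  by rewrite RRe_real //; exact/spectral_diag_eigenvalue/hermitian_normalmx.
have yC : map_mx toC y = (map_mx toC y)^T^t*.
  by apply/matrixP => i j; rewrite !mxE conj_Creal // complex_real.
have toC_entry p q (B : 'M[R]_(p, q)) i j : (B i j)%:C%C = map_mx toC B i j.
  by rewrite mxE.
rewrite -lecR rmorphM /= !toC_entry !map_mxM [map_mx toC y]yC -map_trmx.
exact: herm_quad_ge_spectral_lb.
Qed.
End RealSymmetric.

Section ReplaceColumn.
Context {R : rcfType}.

Lemma col_replace_col {m n} (U : 'M[R]_(m, n)) k x j :
  col j (replace_col U k x) = if j == k then x else col j U.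
Proof. by apply/colP => i; rewrite !mxE; case: eqP => // _; rewrite mxE. Qed.

Lemma mulTmx_col_entry {m n p} (A : 'M[R]_(m, n)) (B : 'M[R]_(m, p)) i j :
  (A^T *m B) i j = ((col i A)^T *m col j B) 0 0.
Proof. by rewrite !mxE; apply: eq_bigr => l _; rewrite !mxE. Qed.

Lemma replace_col_orthonormalP {m n} (U : 'M[R]_(m, n)) k x :
  U^T *m U = 1%:M ->
  (replace_col U k x)^T *m replace_col U k x = 1%:M <->
  x^T *m x = 1%:M /\ (forall j, j != k -> (col j U)^T *m x = 0).
Proof.
move=> U_orth; set V := replace_col U k x.
have VE i j : (V^T *m V) i j =
    ((if i == k then x else col i U)^T *m (if j == k then x else col j U)) 0 0.
  by rewrite mulTmx_col_entry !col_replace_col.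
split=> [V_orth | [x_unit x_orth]].
  move/matrixP: V_orth => V_orth.
  split=> [|j jk]; apply/matrixP => a b; rewrite !ord1 [RHS]mxE ?eqxx.
    by have := V_orth k k; rewrite VE [RHS]mxE !eqxx.
  by have := V_orth j k; rewrite VE [RHS]mxE eqxx (negPf jk).
apply/matrixP => i j; rewrite VE.
case: (eqVneq i k) => [->|ik]; case: (eqVneq j k) => [->|jk].
- by rewrite x_unit !mxE !eqxx.
- rewrite -[_ *m _]trmxK trmx_mul trmxK x_orth // trmx0.
  by rewrite !mxE eq_sym (negPf jk).
- by rewrite x_orth // !mxE (negPf ik).
- by rewrite -mulTmx_col_entry U_orth.
Qed.
End ReplaceColumn.

Lemma canonical_tuple_orthonormal {R : rcfType} {m n} {Lam : 'rV[R]_n}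
    {U : 'M[R]_(m, n)} :
  canonical_tuple Lam U -> U^T *m U = 1%:M.
Proof.
case=> A [C [P [[_ _ C_orth P_orth _] ->]]].
by rewrite trmx_mul mulmxA -(mulmxA P^T) C_orth mulmx1 P_orth.
Qed.

Lemma tr_Fmx {R : rcfType} {m n} (l : R) (Lam : 'rV[R]_n) (U : 'M[R]_(m, n)) :
  (Fmx l Lam U)^T = Fmx l Lam U.
Proof. by rewrite /Fmx /Emx !trmx_mul trmxK tr_diag_mx mulmxA. Qed.

Lemma tr_Smx {R : rcfType} {m n J N} Ld Ud Lx Ux z r k :
  (@Smx R m n J N Ld Ud Lx Ux z r k)^T = Smx Ld Ud Lx Ux z r k.
Proof.
rewrite /Smx linear_sum; apply: eq_bigr => i _.
rewrite linearZ linearB linear_sum /= tr_Fmx; congr (_ *: (_ - _)).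
by apply: eq_bigr => j _; rewrite linearZ /= tr_Fmx.
Qed.

Theorem theorem3 (R : rcfType) (m n J N : nat)
  (Ld : 'I_J -> 'rV[R]_n) (Ud : 'I_J -> 'M[R]_(m, n))
  (Lx : 'I_N -> 'rV[R]_n) (Ux : 'I_N -> 'M[R]_(m, n))
  (z : 'I_J -> 'I_N -> R) (r : 'I_J) (k : 'I_n)
  (W : 'M[R]_(m, (m - n).+1)) (u : 'cV[R]_((m - n).+1)) (lam : R) :
  (n <= m)%N ->
  (forall j, canonical_tuple (Ld j) (Ud j)) ->
  (forall i, canonical_tuple (Lx i) (Ux i)) ->
  (* W has orthonormal columns spanning the orthogonal complement of the
     column space of [U_r^(d)]_{-k} *)
  W^T *m W = 1%:M ->
  (forall x : 'cV[R]_m,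
      (exists y : 'cV[R]_((m - n).+1), x = W *m y) <->
      (forall j : 'I_n, j != k -> (col j (Ud r))^T *m x = 0)) ->
  let S := Smx Ld Ud Lx Ux z r k in
  let M := W^T *m S *m W in
  (* u is a unit eigenvector of W^T S W for its smallest eigenvalue lam *)
  u^T *m u = 1%:M ->
  M *m u = lam *: u ->
  (forall mu : R, eigenvalue M mu -> lam <= mu) ->
  (* W u is an optimal choice of the k-th column *)
  let U' := replace_col (Ud r) k (W *m u) in
  U'^T *m U' = 1%:M /\
  (forall x : 'cV[R]_m,
      (replace_col (Ud r) k x)^T *m replace_col (Ud r) k x = 1%:M ->
      quadf S (W *m u) <= quadf S x).
Proof.
move=> _ Ld_canon _ W_orth W_span S M u_unit Mu lam_min U'.
have U_orth := canonical_tuple_orthonormal (Ld_canon r).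
have M_sym : M^T = M by rewrite !trmx_mul trmxK tr_Smx mulmxA.
have normW y : (W *m y)^T *m (W *m y) = y^T *m y.
  by rewrite trmx_mul mulmxA -(mulmxA _ W^T) W_orth mulmx1.
have quadW y : quadf S (W *m y) = (y^T *m M *m y) 0 0.
  by rewrite /quadf trmx_mul !mulmxA.
have u_quad : (u^T *m M *m u) 0 0 = lam.
  by rewrite -mulmxA Mu -scalemxAr u_unit !mxE eqxx mulr1.
split.
  apply/replace_col_orthonormalP => //; split; first by rewrite normW.
  exact: (W_span _).1 (ex_intro _ u erefl).
move=> x /replace_col_orthonormalP[// | x_unit x_orth].
have [y x_Wy] := (W_span x).2 x_orth; rewrite x_Wy in x_unit *.
rewrite !quadW u_quad.
have := sym_quad_ge_min_eigenvalue y M_sym lam_min.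
by rewrite -normW x_unit mxE eqxx mulr1.
Qed.
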